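(* With $I_z$ as in the context, $I_z$ is stable under right multiplication by $\frac{1+v}{2}$, so it is a right $\mathcal O_L$-module via $\frac{1+\sqrt{-N}}{2}\mapsto$ right multiplication by $\frac{1+v}{2}$; and as a right $\mathcal O_L$-module, $I_z\cong J\oplus J$, where $J=a\mathbb Z+\frac{b-\sqrt{-N}}{2}\mathbb Z\subset\mathcal O_L$ (an ideal of $\mathcal O_L$ in the class determined by $Q$).
   Context: Let $D<-4$ be the discriminant of an imaginary quadratic field $K=\mathbb Q(\sqrt D)$ with $|D|$ prime. Let $N$ be a prime, split in the ring of integers of $K$, such that $-N$ is the discriminant of $L=\mathbb Q(\sqrt{-N})$ with ring of integers $\mathcal O_L$. Fix a prime ideal $\mathcal N$ of $\mathcal O_K$ of norm $N$, conjugate $\bar{\mathcal N}$; for a primitive integral ideal $\mathfrak a$ of $\mathcal O_K$ of norm prime to $N$, write $\mathfrak a\bar{\mathcal N}=a_1N\mathbb Z+\frac{-b_1+\sqrt D}{2}\mathbb Z$ with $a_1,b_1\in\mathbb Z$. Let $Q=[a,b,c]$ be a primitive positive definite form with $b^2-4ac=-N$. Let $B'=(D,-N)_{\mathbb Q}$ with basis $1,u,v,uv$, $u^2=D$, $v^2=-N$, $uv=-vu$. Define $I_z=\mathbb Zx_1+\mathbb Zx_2+\mathbb Zy_1+\mathbb Zy_2$ with $x_1=\frac{b_1-u}{2a_1N}\,av$, $x_2=\frac{b_1-u}{2a_1N}\cdot\frac{N+bv}{2}$, $y_1=\frac{b-v}{2}$, $y_2=-a$. *)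

From HB Require Import structures.
From mathcomp Require Import all_boot all_order all_algebra.
Set Implicit Arguments. Unset Strict Implicit. Unset Printing Implicit Defensive.
Import Order.TTheory GRing.Theory Num.Theory.
Local Open Scope ring_scope.

Definition sqfree_int (m : int) : Prop :=
  m != 0 /\ forall p : nat, prime p -> ~ ((p%:Z ^+ 2) %| m)%Z.

Definition is_fund_disc (d : int) : Prop :=
  d != 1 /\
  ( ((d %% 4)%Z = 1 /\ sqfree_int d) \/
    (exists m : int, d = 4 * m /\ ((m %% 4)%Z = 2 \/ (m %% 4)%Z = 3) /\ sqfree_int m) ).

(* the rational prime p splits in the ring of integers of Q(sqrt d),
   d a fundamental discriminant: Kronecker symbol (d/p) = 1 *)
Definition splits_in (d : int) (p : nat) : Prop :=
  if odd p then ~ (p%:Z %| d)%Z /\ exists x : int, (p%:Z %| x ^+ 2 - d)%Z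
  else (d %% 8)%Z = 1.

(** ** The quaternion algebra (alpha, beta)_Q with basis 1, u, v, uv,
       u^2 = alpha, v^2 = beta, uv = -vu.  Quat c0 c1 c2 c3 = c0 + c1 u + c2 v + c3 uv. *)
Record quat := Quat { q0 : rat; q1 : rat; q2 : rat; q3 : rat }.

Definition qadd (x y : quat) : quat :=
  Quat (q0 x + q0 y) (q1 x + q1 y) (q2 x + q2 y) (q3 x + q3 y).

Definition qscale (c : rat) (x : quat) : quat :=
  Quat (c * q0 x) (c * q1 x) (c * q2 x) (c * q3 x).

Definition qmul (alpha beta : rat) (x y : quat) : quat :=
  Quat (q0 x * q0 y + alpha * q1 x * q1 y + beta * q2 x * q2 y
          - alpha * beta * q3 x * q3 y)
       (q0 x * q1 y + q1 x * q0 y + beta * (q3 x * q2 y - q2 x * q3 y))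
       (q0 x * q2 y + q2 x * q0 y + alpha * (q1 x * q3 y - q3 x * q1 y))
       (q0 x * q3 y + q3 x * q0 y + q1 x * q2 y - q2 x * q1 y).

Definition Bmul (D : int) (N : nat) := qmul (D%:~R) (- (N%:R)).

Definition in_span4 (g1 g2 g3 g4 x : quat) : Prop :=
  exists k1 k2 k3 k4 : int,
    x = qadd (qadd (qscale k1%:~R g1) (qscale k2%:~R g2))
             (qadd (qscale k3%:~R g3) (qscale k4%:~R g4)).

Definition wz (N : nat) (a1 b1 : int) : quat :=
  qscale (2 * a1%:~R * N%:R)^-1 (Quat b1%:~R (-1) 0 0).

Definition x1 (D : int) (N : nat) (a1 b1 a : int) : quat :=
  Bmul D N (wz N a1 b1) (Quat 0 0 a%:~R 0).
Definition x2 (D : int) (N : nat) (a1 b1 b : int) : quat :=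
  Bmul D N (wz N a1 b1) (Quat (N%:R / 2) 0 (b%:~R / 2) 0).
Definition y1 (b : int) : quat := Quat (b%:~R / 2) 0 (- (1 / 2)) 0.
Definition y2 (a : int) : quat := Quat (- a%:~R) 0 0 0.

Definition Iz (D : int) (N : nat) (a1 b1 a b : int) (x : quat) : Prop :=
  in_span4 (x1 D N a1 b1 a) (x2 D N a1 b1 b) (y1 b) (y2 a) x.

Definition omegaB : quat := Quat (1/2) 0 (1/2) 0.

(** ** L = Q(sqrt(-N)):  LQ p q = p + q sqrt(-N) *)
Record Lnum := LQ { lre : rat; lim : rat }.

Definition Ladd (z w : Lnum) : Lnum := LQ (lre z + lre w) (lim z + lim w).
Definition Lmul (N : nat) (z w : Lnum) : Lnum :=
  LQ (lre z * lre w - N%:R * lim z * lim w) (lre z * lim w + lim z * lre w).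

Definition omegaL : Lnum := LQ (1/2) (1/2).

Definition inJ (a b : int) (z : Lnum) : Prop :=
  exists k1 k2 : int,
    z = Ladd (LQ (k1%:~R * a%:~R) 0) (LQ (k2%:~R * (b%:~R / 2)) (k2%:~R * (- (1/2)))).

(** Right O_L-module structures: on I_z via right multiplication by (1+v)/2,
    on J (+) J by componentwise multiplication by (1+sqrt(-N))/2.  Since
    O_L = Z[omegaL], an isomorphism of right O_L-modules is exactly an
    additive bijection I_z -> J x J intertwining these two actions. *)
Definition OL_iso_Iz_JJ (D : int) (N : nat) (a1 b1 a b : int)
    (f : quat -> Lnum * Lnum) : Prop :=
  [/\ (forall x, Iz D N a1 b1 a b x -> inJ a b (f x).1 /\ inJ a b (f x).2),
      (forall x y, Iz D N a1 b1 a b x -> Iz D N a1 b1 a b y ->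
         f (qadd x y) = (Ladd (f x).1 (f y).1, Ladd (f x).2 (f y).2)),
      (forall x, Iz D N a1 b1 a b x ->
         f (Bmul D N x omegaB) = (Lmul N (f x).1 omegaL, Lmul N (f x).2 omegaL)),
      (forall x y, Iz D N a1 b1 a b x -> Iz D N a1 b1 a b y -> f x = f y -> x = y) &
      (forall z1 z2, inJ a b z1 -> inJ a b z2 ->
         exists2 x, Iz D N a1 b1 a b x & f x = (z1, z2))].

From HB Require Import structures.
From mathcomp Require Import all_boot all_order all_algebra ring zify.
Set Implicit Arguments.
Unset Strict Implicit.
Unset Printing Implicit Defensive.
Import Order.TTheory GRing.Theory Num.Theory.
Local Open Scope ring_scope.

(* Write an element of B' as x = alpha + u beta with alpha, beta in L = Q(v).
   As a right L-module B' is free on 1 and w = (b1 - u) v / (2 a1 N), and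
   x = w (2 a1 v beta) + (alpha + b1 beta).  Since v^-1 (N + b v)/2 = (b - v)/2,
   the generators of I_z are x1 = w a, x2 = w (b - v)/2, y1 = (b - v)/2 and
   y2 = -a, so these coordinates identify I_z with J (+) J.  Right multiplication
   by (1 + v)/2 becomes multiplication by (1 + sqrt(-N))/2 on each coordinate,
   and J is stable under it because b is odd (b^2 - 4ac = -N with 4 not dividing
   N), which makes J an ideal of O_L. *)

Definition quat_to_LL (N : nat) (a1 b1 : int) (x : quat) : Lnum * Lnum :=
  (LQ (- (2 * a1%:~R * N%:R * q3 x)) (2 * a1%:~R * q1 x),
   LQ (q0 x + b1%:~R * q1 x) (q2 x + b1%:~R * q3 x)).

Definition LL_to_quat (N : nat) (a1 b1 : int) (z : Lnum * Lnum) : quat :=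
  let beta1 := lim z.1 / (2 * a1%:~R) in
  let beta3 := - lre z.1 / (2 * a1%:~R * N%:R) in
  Quat (lre z.2 - b1%:~R * beta1) beta1 (lim z.2 - b1%:~R * beta3) beta3.

Definition Jelt (a b : int) (k1 k2 : int) : Lnum :=
  Ladd (LQ (k1%:~R * a%:~R) 0) (LQ (k2%:~R * (b%:~R / 2)) (k2%:~R * (- (1/2)))).

Definition Iz_comb (D : int) (N : nat) (a1 b1 a b : int) (k1 k2 k3 k4 : int) : quat :=
  qadd (qadd (qscale k1%:~R (x1 D N a1 b1 a)) (qscale k2%:~R (x2 D N a1 b1 b)))
       (qadd (qscale k3%:~R (y1 b)) (qscale k4%:~R (y2 a))).

Lemma four_ndvd_prime (p : nat) : prime p -> ~~ (4 %| p)%N.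
Proof.
move=> p_pr; apply/negP => dvd4p.
have /(prime_nt_dvdP p_pr) p2 : (2 %| p)%N := dvdn_trans (isT : (2 %| 4)%N) dvd4p.
by rewrite -p2 in dvd4p.
Qed.

Lemma disc_odd (N : nat) (a b c : int) :
  ~~ (4 %| N)%N -> b ^+ 2 - 4 * a * c = - N%:Z -> b = (b %/ 2)%Z * 2 + 1.
Proof.
move=> N4 disc.
have [//|b_even] : b = (b %/ 2)%Z * 2 + 1 \/ b = (b %/ 2)%Z * 2 by lia.
case/negP: N4; rewrite -(@dvdzE 4 N); apply/dvdzP.
exists (a * c - (b %/ 2)%Z ^+ 2).
by rewrite -[N%:Z]opprK -disc {1}b_even; ring.
Qed.

Lemma Jelt_mul_omegaL (N : nat) (a b c t k1 k2 : int) :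
  b = t * 2 + 1 -> b ^+ 2 - 4 * a * c = - N%:Z ->
  Lmul N (Jelt a b k1 k2) omegaL = Jelt a b (k1 * (t + 1) + k2 * c) (- k1 * a - k2 * t).
Proof.
move=> -> disc; rewrite /Jelt /Lmul /Ladd /omegaL /=.
have -> : N%:R = (4 * a * c - (t * 2 + 1) ^+ 2)%:~R :> rat.
  by rewrite pmulrn -[N%:Z]opprK -disc opprB.
by congr LQ; field.
Qed.

Lemma inJ_mul_omegaL (N : nat) (a b c : int) :
  ~~ (4 %| N)%N -> b ^+ 2 - 4 * a * c = - N%:Z ->
  forall z, inJ a b z -> inJ a b (Lmul N z omegaL).
Proof.
move=> N4 disc _ [k1 [k2 ->]].
rewrite -/(Jelt a b k1 k2) (Jelt_mul_omegaL k1 k2 (disc_odd N4 disc) disc).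
by eexists; eexists.
Qed.

Section QuatToLL.

Variables (N : nat) (a1 b1 : int).

Lemma quat_to_LL_add (x y : quat) :
  quat_to_LL N a1 b1 (qadd x y) =
  (Ladd (quat_to_LL N a1 b1 x).1 (quat_to_LL N a1 b1 y).1,
   Ladd (quat_to_LL N a1 b1 x).2 (quat_to_LL N a1 b1 y).2).
Proof. by case: x => ????; case: y => ????; congr (LQ _ _, LQ _ _) => /=; ring. Qed.

Lemma quat_to_LL_mul_omegaB (D : int) (x : quat) :
  quat_to_LL N a1 b1 (Bmul D N x omegaB) =
  (Lmul N (quat_to_LL N a1 b1 x).1 omegaL, Lmul N (quat_to_LL N a1 b1 x).2 omegaL).
Proof. by case: x => ????; congr (LQ _ _, LQ _ _) => /=; field. Qed.

Hypotheses (a1_neq0 : a1 != 0) (N_gt0 : (0 < N)%N).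

Let a1R : a1%:~R != 0 :> rat. Proof. by rewrite intr_eq0. Qed.
Let NR : N%:R != 0 :> rat. Proof. by rewrite pnatr_eq0 -lt0n. Qed.

Lemma quat_to_LLK : cancel (quat_to_LL N a1 b1) (LL_to_quat N a1 b1).
Proof. by case=> ????; congr Quat => /=; field; rewrite ?a1R ?NR. Qed.

Lemma quat_to_LL_inj : injective (quat_to_LL N a1 b1).
Proof. exact: can_inj quat_to_LLK. Qed.

Lemma quat_to_LL_Iz_comb (D a b k1 k2 k3 k4 : int) :
  quat_to_LL N a1 b1 (Iz_comb D N a1 b1 a b k1 k2 k3 k4) =
  (Jelt a b k1 k2, Jelt a b (- k4) k3).
Proof. by congr (LQ _ _, LQ _ _) => /=; field; rewrite ?a1R ?NR. Qed.

Variables (D a b : int).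

Lemma Iz_to_JJ (x : quat) : Iz D N a1 b1 a b x ->
  inJ a b (quat_to_LL N a1 b1 x).1 /\ inJ a b (quat_to_LL N a1 b1 x).2.
Proof.
move=> [k1 [k2 [k3 [k4 ->]]]].
rewrite (quat_to_LL_Iz_comb D a b k1 k2 k3 k4).
by split; do 2 eexists.
Qed.

Lemma JJ_to_Iz (z1 z2 : Lnum) : inJ a b z1 -> inJ a b z2 ->
  exists2 x, Iz D N a1 b1 a b x & quat_to_LL N a1 b1 x = (z1, z2).
Proof.
move=> [p1 [p2 ->]] [m1 [m2 ->]].
exists (Iz_comb D N a1 b1 a b p1 p2 m2 (- m1)); first by do 4 eexists.
by rewrite quat_to_LL_Iz_comb opprK.
Qed.

Lemma Iz_mul_omegaB (c : int) : ~~ (4 %| N)%N -> b ^+ 2 - 4 * a * c = - N%:Z ->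
  forall x, Iz D N a1 b1 a b x -> Iz D N a1 b1 a b (Bmul D N x omegaB).
Proof.
move=> N4 disc x /Iz_to_JJ[J1 J2].
have [y Izy fy] := JJ_to_Iz (inJ_mul_omegaL N4 disc J1) (inJ_mul_omegaL N4 disc J2).
suff -> : Bmul D N x omegaB = y by [].
by apply: quat_to_LL_inj; rewrite quat_to_LL_mul_omegaB.
Qed.

End QuatToLL.

Theorem mainTheorem15 (D : int) (N : nat) (r a1 b1 a b c : int) :
  D < -4 -> prime `|D|%N -> is_fund_disc D ->
  prime N -> is_fund_disc (- (N%:Z)) -> splits_in D N ->
  (4 * N%:Z %| r ^+ 2 - D)%Z ->
  a1 != 0 -> coprime `|a1|%N N ->
  (4 * a1 * N%:Z %| b1 ^+ 2 - D)%Z ->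
  (2 * N%:Z %| b1 + r)%Z ->
  0 < a -> b ^+ 2 - 4 * a * c = - (N%:Z) -> gcdz (gcdz a b) c = 1 ->
  (forall x, Iz D N a1 b1 a b x -> Iz D N a1 b1 a b (Bmul D N x omegaB)) /\
  (exists f : quat -> Lnum * Lnum, OL_iso_Iz_JJ D N a1 b1 a b f).
Proof.
move=> _ _ _ N_prime _ _ _ a1_neq0 _ _ _ _ disc _.
have N_gt0 := prime_gt0 N_prime.
split; first exact: Iz_mul_omegaB (four_ndvd_prime N_prime) disc.
exists (quat_to_LL N a1 b1); split.
- exact: Iz_to_JJ.
- by move=> x y _ _; apply: quat_to_LL_add.
- by move=> x _; apply: quat_to_LL_mul_omegaB.
- by move=> x y _ _; apply: quat_to_LL_inj.
- exact: JJ_to_Iz.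
Qed.
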